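(* For any completely regular frame $L$, the following are equivalent: (1) $L$ is extremally disconnected; (2) $\overline{\mathrm{C}}(L)=\overline{\mathrm{H}}(L)$; (3) $\overline{\mathrm{C}}(L)$ is a complete lattice.
   Context: $\mathbb{Q}$ is the rationals; $a^\ast$ is the pseudocomplement. A frame is extremally disconnected if $a^\ast\vee a^{\ast\ast}=1$ for all $a$. The frame $\mathfrak{L}(\overline{\mathbb{IR}})$ is presented by generators $(r,\textsf{---})$, $(\textsf{---},s)$ ($r,s\in\mathbb{Q}$) subject to (r1) $(r,\textsf{---})\wedge(\textsf{---},s)=0$ whenever $r\ge s$; (r3) $(r,\textsf{---})=\bigvee_{s>r}(s,\textsf{---})$; (r4) $(\textsf{---},s)=\bigvee_{r<s}(\textsf{---},r)$. $\overline{\mathrm{IC}}(L)$ is the set of frame homomorphisms $\mathfrak{L}(\overline{\mathbb{IR}})\to L$ ordered by $f\le g$ iff $f(r,\textsf{---})\le g(r,\textsf{---})$ and $g(\textsf{---},s)\le f(\textsf{---},s)$ for all $r,s$; $\overline{\mathrm{C}}(L)$ is the subposet of those $f$ with $f(r,\textsf{---})\vee f(\textsf{---},s)=1$ whenever $r<s$; $\overline{\mathrm{H}}(L)$ is the subposet of those $f$ with $f(r,\textsf{---})^\ast\le f(\textsf{---},s)$ and $f(\textsf{---},s)^\ast\le f(r,\textsf{---})$ whenever $r<s$. *)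

From mathcomp Require Import all_boot all_order all_algebra.
Set Implicit Arguments. Unset Strict Implicit. Unset Printing Implicit Defensive.
Import Order.TTheory GRing.Theory Num.Theory.

Record frame := Frame {
  carrier :> Type;
  le : carrier -> carrier -> Prop;
  le_refl : forall a, le a a;
  le_trans : forall a b c, le a b -> le b c -> le a c;
  le_antisym : forall a b, le a b -> le b a -> a = b;
  meet : carrier -> carrier -> carrier;
  meet_glb : forall a b c, le c (meet a b) <-> (le c a /\ le c b);
  sup : (carrier -> Prop) -> carrier;
  sup_ub : forall (S : carrier -> Prop) x, S x -> le x (sup S);
  sup_least : forall (S : carrier -> Prop) y,
      (forall x, S x -> le x y) -> le (sup S) y;
  meet_sup_distr : forall a (S : carrier -> Prop),
      meet a (sup S) = sup (fun y => exists2 x, S x & y = meet a x)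
}.

Section FrameDefs.
Variable L : frame.

Definition fbot : L := sup (fun _ : L => False).
Definition ftop : L := sup (fun _ : L => True).
Definition fjoin (a b : L) : L := sup (fun x => x = a \/ x = b).

Definition pc (a : L) : L := sup (fun x => meet x a = fbot).

Definition ext_disc : Prop := forall a : L, fjoin (pc a) (pc (pc a)) = ftop.

Definition rather_below (a b : L) : Prop := fjoin (pc a) b = ftop.

Definition completely_below (a b : L) : Prop :=
  exists c : rat -> L, c 0%R = a /\ c 1%R = b /\
    (forall p q : rat, (0 <= p)%R -> (p < q)%R -> (q <= 1)%R ->
        rather_below (c p) (c q)).

Definition completely_regular : Prop :=
  forall a : L, a = sup (fun x => completely_below x a).

(** By the universal property of the presentation, a frame homomorphism
   f : L(IR-bar) -> L is the same thing as an assignment of the generators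
   (r,--) |-> fl r and (--,s) |-> fr s satisfying the images of the
   relations (r1), (r3), (r4) in L. *)
Record ir_map := IRMap { fl : rat -> L; fr : rat -> L }.

Definition is_frame_hom_IR (f : ir_map) : Prop :=
  (forall r s : rat, (s <= r)%R -> meet (fl f r) (fr f s) = fbot) /\
  (forall r : rat, fl f r = sup (fun x => exists2 s : rat, (r < s)%R & x = fl f s)) /\
  (forall s : rat, fr f s = sup (fun x => exists2 r : rat, (r < s)%R & x = fr f r)).

Definition ICbar (f : ir_map) : Prop := is_frame_hom_IR f.

Definition ic_le (f g : ir_map) : Prop :=
  (forall r : rat, le (fl f r) (fl g r)) /\ (forall s : rat, le (fr g s) (fr f s)).

Definition Cbar (f : ir_map) : Prop :=
  ICbar f /\ forall r s : rat, (r < s)%R -> fjoin (fl f r) (fr f s) = ftop.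

Definition Hbar (f : ir_map) : Prop :=
  ICbar f /\ forall r s : rat, (r < s)%R ->
     le (pc (fl f r)) (fr f s) /\ le (pc (fr f s)) (fl f r).

Definition Cbar_eq_Hbar : Prop := forall f : ir_map, Cbar f <-> Hbar f.

Definition Cbar_complete : Prop :=
  forall S : ir_map -> Prop, (forall f, S f -> Cbar f) ->
    exists u : ir_map, Cbar u /\ (forall f, S f -> ic_le f u) /\
      (forall v, Cbar v -> (forall f, S f -> ic_le f v) -> ic_le u v).

End FrameDefs.

(** Every element of C-bar(L)
    lies in H-bar(L); conversely, if [a^* \/ a^** = 1] for all [a], then for
    [f] in H-bar(L) and [r < t < s] we get
    [f(r,-) \/ f(-,s) >= f(t,-)^** \/ f(t,-)^* = 1].  The constant map
    [(r,-) |-> a^*], [(-,s) |-> a^**] always lies in H-bar(L), and it lies in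
    C-bar(L) exactly when [a^* \/ a^** = 1].
    In an extremally disconnected frame a family in C-bar(L) has the join
    [(r,-) |-> \/_{t>r} g(t)^**], [(-,s) |-> \/_{t<s} g(t)^*], where
    [g(t) = \/_f f(t,-)].  Conversely, if C-bar(L) is complete, fix [a].
    Each scale [c] with [c 1 = a] gives, as in Urysohn's lemma, a function
    equal to 1 on [c 0] and to 0 off [a].  Each scale [d] with [d 1 = a^*]
    gives an upper bound of all of these functions that is 0 on [d 0].  By
    complete regularity the join [u] then satisfies [u(-,1) <= a^*] and
    [u(0,-) <= a^**], so [u(0,-) \/ u(-,1) = 1] gives [a^* \/ a^** = 1]. *)

From mathcomp Require Import all_boot all_order all_algebra.
From mathcomp Require Import lra.
Import GRing.Theory Num.Theory Order.POrderTheory(lexx).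
Local Open Scope ring_scope.

Section FrameTheory.
Variable L : frame.
Implicit Types (a b x y z : L) (S T : L -> Prop).

Lemma le0x x : le (fbot L) x. Proof. by apply: sup_least. Qed.
Lemma lex1 x : le x (ftop L). Proof. by apply: sup_ub. Qed.

Lemma lex0_eq x : le x (fbot L) -> x = fbot L.
Proof. by move=> h; apply: le_antisym h _; apply: le0x. Qed.

Lemma le1x_eq x : le (ftop L) x -> x = ftop L.
Proof. by move=> h; apply: le_antisym (lex1 x) h. Qed.

Lemma leIl a b : le (meet a b) a.
Proof. by have [] := (meet_glb a b (meet a b)).1 (le_refl _). Qed.

Lemma leIr a b : le (meet a b) b.
Proof. by have [] := (meet_glb a b (meet a b)).1 (le_refl _). Qed.

Lemma lexI {a b z} : le z a -> le z b -> le z (meet a b).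
Proof. by move=> za zb; apply/meet_glb. Qed.

Lemma meetC a b : meet a b = meet b a.
Proof. by apply: le_antisym; apply: lexI; (apply: leIl || apply: leIr). Qed.

Lemma leI2 {a b x y} : le a x -> le b y -> le (meet a b) (meet x y).
Proof.
by move=> hax hby; apply: lexI; [apply: le_trans hax | apply: le_trans hby];
  [apply: leIl | apply: leIr].
Qed.

Lemma meetx1 a : meet a (ftop L) = a.
Proof. exact: le_antisym (leIl _ _) (lexI (le_refl a) (lex1 a)). Qed.

Lemma leUl a b : le a (fjoin a b). Proof. by apply: sup_ub; left. Qed.
Lemma leUr a b : le b (fjoin a b). Proof. by apply: sup_ub; right. Qed.

Lemma leUx {a b z} : le a z -> le b z -> le (fjoin a b) z.
Proof. by move=> az bz; apply: sup_least => x [->|->]. Qed.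

Lemma joinC a b : fjoin a b = fjoin b a.
Proof. by apply: le_antisym; apply: leUx; (apply: leUl || apply: leUr). Qed.

Lemma join_top_le2 {a b x y} :
  le a x -> le b y -> fjoin a b = ftop L -> fjoin x y = ftop L.
Proof.
move=> hax hby ab1; apply: le1x_eq; rewrite -ab1.
by apply: leUx; [apply: le_trans hax (leUl _ _) | apply: le_trans hby (leUr _ _)].
Qed.

Lemma meet0x a : meet (fbot L) a = fbot L.
Proof. exact/lex0_eq/leIl. Qed.

Lemma meetx0 a : meet a (fbot L) = fbot L.
Proof. by rewrite meetC meet0x. Qed.

Lemma meet_sup_eq0 a S :
  (forall x, S x -> meet a x = fbot L) -> meet a (sup S) = fbot L.
Proof.
move=> hS; rewrite meet_sup_distr; apply: lex0_eq; apply: sup_least.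
by move=> _ [x Sx ->]; rewrite hS //; apply: le_refl.
Qed.

Lemma meet_sup2_eq0 S T :
  (forall x y, S x -> T y -> meet x y = fbot L) -> meet (sup S) (sup T) = fbot L.
Proof.
move=> hST; apply: meet_sup_eq0 => y Ty; rewrite meetC.
by apply: meet_sup_eq0 => x Sx; rewrite meetC; apply: hST.
Qed.

Lemma join_top_le {a b z} : fjoin a b = ftop L -> meet z a = fbot L -> le z b.
Proof.
move=> ab1 za0; rewrite -(meetx1 z) -ab1 meet_sup_distr; apply: sup_least.
move=> _ [x [->|->] ->]; last exact: leIr.
by rewrite za0; apply: le0x.
Qed.

Lemma meet_pc a : meet a (pc a) = fbot L.
Proof. by apply: meet_sup_eq0 => x; rewrite meetC. Qed.

Lemma le_pc a x : meet x a = fbot L -> le x (pc a).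
Proof. by move=> xa0; apply: sup_ub. Qed.

Lemma pc_anti {a b} : le a b -> le (pc b) (pc a).
Proof.
move=> ab; apply: le_pc; apply: lex0_eq; rewrite -(meet_pc b) meetC.
exact: leI2 ab (le_refl _).
Qed.

Lemma le_pcpc a : le a (pc (pc a)).
Proof. exact/le_pc/meet_pc. Qed.

Lemma pc0 : pc (fbot L) = ftop L.
Proof. by apply: le1x_eq; apply: le_pc; rewrite meetC; apply: lex0_eq; apply: leIl. Qed.

Lemma rather_below_le a b : rather_below a b -> le a b.
Proof. by move=> ab; apply: join_top_le ab (meet_pc a). Qed.

Lemma rather_below0x a : rather_below (fbot L) a.
Proof. by rewrite /rather_below pc0; apply: le1x_eq; apply: leUl. Qed.

Lemma rather_belowx1 a : rather_below a (ftop L).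
Proof. by apply: le1x_eq; apply: leUr. Qed.

Lemma completely_regular_le_pc a z : completely_regular L ->
  (forall x, completely_below x a -> meet z x = fbot L) -> le z (pc a).
Proof. by move=> CR hz; apply: le_pc; rewrite (CR a); apply: meet_sup_eq0. Qed.

Definition sup_gt (h : rat -> L) (r : rat) : L :=
  sup (fun x => exists2 t, r < t & x = h t).
Definition sup_lt (h : rat -> L) (s : rat) : L :=
  sup (fun x => exists2 t, t < s & x = h t).

Implicit Types (h k : rat -> L) (r s t : rat).

Lemma le_sup_gt h {r t} : r < t -> le (h t) (sup_gt h r).
Proof. by move=> rt; apply: sup_ub; exists t. Qed.

Lemma le_sup_lt h {s t} : t < s -> le (h t) (sup_lt h s).
Proof. by move=> ts; apply: sup_ub; exists t. Qed.

Lemma sup_gt_le h r z : (forall t, r < t -> le (h t) z) -> le (sup_gt h r) z.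
Proof. by move=> hz; apply: sup_least => _ [t rt ->]; apply: hz. Qed.

Lemma sup_lt_le h s z : (forall t, t < s -> le (h t) z) -> le (sup_lt h s) z.
Proof. by move=> hz; apply: sup_least => _ [t ts ->]; apply: hz. Qed.

Lemma sup_gt_idem h r : sup_gt (sup_gt h) r = sup_gt h r.
Proof.
apply: le_antisym; apply: sup_gt_le => t rt.
  by apply: sup_gt_le => t' tt'; apply: le_sup_gt; lra.
have mid : r < (r + t) / 2 by lra.
by apply: le_trans (le_sup_gt (sup_gt h) mid); apply: le_sup_gt; lra.
Qed.

Lemma sup_lt_idem h s : sup_lt (sup_lt h) s = sup_lt h s.
Proof.
apply: le_antisym; apply: sup_lt_le => t ts.
  by apply: sup_lt_le => t' t't; apply: le_sup_lt; lra.
have mid : (t + s) / 2 < s by lra.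
by apply: le_trans (le_sup_lt (sup_lt h) mid); apply: le_sup_lt; lra.
Qed.

Lemma sup_gt_const a r : sup_gt (fun=> a) r = a.
Proof.
apply: le_antisym; first by apply: sup_gt_le => *; apply: le_refl.
by apply: (le_sup_gt (fun=> a) (_ : r < r + 1)); lra.
Qed.

Lemma sup_lt_const a s : sup_lt (fun=> a) s = a.
Proof.
apply: le_antisym; first by apply: sup_lt_le => *; apply: le_refl.
by apply: (le_sup_lt (fun=> a) (_ : s - 1 < s)); lra.
Qed.

Lemma sup_gt_reflect h r : sup_gt (fun t => h (1 - t)) r = sup_lt h (1 - r).
Proof.
apply: le_antisym.
  by apply: sup_gt_le => t rt; apply: le_sup_lt; lra.
apply: sup_lt_le => t tr; rewrite -[t](subKr 1).
by apply: le_sup_gt; lra.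
Qed.

Lemma sup_lt_reflect h s : sup_lt (fun t => h (1 - t)) s = sup_gt h (1 - s).
Proof.
apply: le_antisym.
  by apply: sup_lt_le => t ts; apply: le_sup_gt; lra.
apply: sup_gt_le => t st; rewrite -[t](subKr 1).
by apply: le_sup_lt; lra.
Qed.

Lemma ICbar_fl_anti {f : ir_map L} {r s} : ICbar f -> r < s -> le (fl f s) (fl f r).
Proof. by move=> [_ [r3 _]] rs; rewrite (r3 r); apply: le_sup_gt. Qed.

Lemma ICbar_fr_le_pc {f : ir_map L} {r s} :
  ICbar f -> s <= r -> le (fr f s) (pc (fl f r)).
Proof. by move=> [r1 _] sr; apply: le_pc; rewrite meetC; apply: r1. Qed.

Lemma Cbar_pc_fl_le {f : ir_map L} {r s} : Cbar f -> r < s -> le (pc (fl f r)) (fr f s).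
Proof.
by move=> [_ fC] rs; apply: join_top_le (fC r s rs) _; rewrite meetC meet_pc.
Qed.

Lemma Cbar_pc_fr_le {f : ir_map L} {r s} : Cbar f -> r < s -> le (pc (fr f s)) (fl f r).
Proof.
move=> [_ fC] rs; apply: (join_top_le (a := fr f s)); last by rewrite meetC meet_pc.
by rewrite joinC; apply: fC.
Qed.

Lemma Cbar_Hbar (f : ir_map L) : Cbar f -> Hbar f.
Proof.
move=> fC; split=> [|r s rs]; first exact: fC.1.
by split; [apply: Cbar_pc_fl_le | apply: Cbar_pc_fr_le].
Qed.

Lemma Hbar_Cbar (f : ir_map L) : ext_disc L -> Hbar f -> Cbar f.
Proof.
move=> ED [fI fH]; split=> // r s rs.
have [rt ts] : r < (r + s) / 2 /\ (r + s) / 2 < s by split; lra.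
set t := (r + s) / 2 in rt ts.
have := ED (fl f t); rewrite joinC; apply: join_top_le2; last exact: (fH t s ts).1.
apply: le_trans (fH r t rt).2.
by apply/pc_anti/ICbar_fr_le_pc.
Qed.

Definition pc_map (a : L) : ir_map L := IRMap (fun=> pc a) (fun=> pc (pc a)).

Lemma pc_map_Hbar (a : L) : Hbar (pc_map a).
Proof.
split; first split=> [r s _|]; first exact: meet_pc.
  by split=> [r|s]; [exact: esym (sup_gt_const _ r) | exact: esym (sup_lt_const _ s)].
by move=> r s _; split; [apply: le_refl | apply/pc_anti/le_pcpc].
Qed.

Lemma Cbar_eq_Hbar_ext_disc : Cbar_eq_Hbar L -> ext_disc L.
Proof.
by move=> CH a; have [_ /(_ 0 1 ltr01)] := (CH (pc_map a)).2 (pc_map_Hbar a).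
Qed.

Definition sup_map (h k : rat -> L) : ir_map L := IRMap (sup_gt h) (sup_lt k).

Lemma sup_map_ICbar h k :
  (forall t t', t' < t -> meet (h t) (k t') = fbot L) -> ICbar (sup_map h k).
Proof.
move=> hk0; split=> [r s sr|].
  by apply: meet_sup2_eq0 => _ _ [t rt ->] [t' t's ->]; apply: hk0; lra.
by split=> [r|s]; [exact: esym (sup_gt_idem h r) | exact: esym (sup_lt_idem k s)].
Qed.

Lemma sup_map_Cbar h k :
  (forall t t', t' < t -> meet (h t) (k t') = fbot L) ->
  (forall t t', t < t' -> fjoin (h t) (k t') = ftop L) -> Cbar (sup_map h k).
Proof.
move=> hk0 hk1; split=> [|r s rs]; first exact: sup_map_ICbar.
have [rt tt' t's] : [/\ r < (2 * r + s) / 3, (2 * r + s) / 3 < (r + 2 * s) / 3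
  & (r + 2 * s) / 3 < s] by split; lra.
exact: join_top_le2 (le_sup_gt h rt) (le_sup_lt k t's) (hk1 _ _ tt').
Qed.

Section CbarJoin.
Variable S : ir_map L -> Prop.

Definition fl_sup (t : rat) : L := sup (fun x => exists2 f, S f & x = fl f t).

Definition Cbar_sup : ir_map L :=
  sup_map (fun t => pc (pc (fl_sup t))) (fun t => pc (fl_sup t)).

Lemma le_fl_sup {f} t : S f -> le (fl f t) (fl_sup t).
Proof. by move=> Sf; apply: sup_ub; exists f. Qed.

Lemma fl_sup_anti {t t'} :
  (forall f, S f -> ICbar f) -> t' < t -> le (fl_sup t) (fl_sup t').
Proof.
move=> SI t't; apply: sup_least => _ [f Sf ->].
exact: le_trans (ICbar_fl_anti (SI f Sf) t't) (le_fl_sup t' Sf).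
Qed.

Lemma Cbar_sup_Cbar : (forall f, S f -> Cbar f) -> ext_disc L -> Cbar Cbar_sup.
Proof.
move=> SC ED; have SI f Sf : ICbar f := (SC f Sf).1.
apply: sup_map_Cbar => [t t' t't | t t' tt'].
  rewrite meetC; apply: lex0_eq; rewrite -(meet_pc (pc (fl_sup t))).
  exact: leI2 (pc_anti (fl_sup_anti SI t't)) (le_refl _).
have := ED (fl_sup t); rewrite joinC; apply: join_top_le2; first exact: le_refl.
exact: pc_anti (fl_sup_anti SI tt').
Qed.

Lemma Cbar_sup_ub f : Cbar f -> S f -> ic_le f Cbar_sup.
Proof.
move=> fC Sf; split=> [r|s] /=.
  rewrite (fC.1.2.1 r); apply: sup_gt_le => t rt; apply: le_trans (le_sup_gt _ rt).
  exact: le_trans (le_fl_sup t Sf) (le_pcpc _).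
apply: sup_lt_le => t ts.
exact: le_trans (pc_anti (le_fl_sup t Sf)) (Cbar_pc_fl_le fC ts).
Qed.

Lemma Cbar_sup_least v : Cbar v -> (forall f, S f -> ic_le f v) -> ic_le Cbar_sup v.
Proof.
move=> vC ub; have gv t : le (fl_sup t) (fl v t).
  by apply: sup_least => _ [f Sf ->]; apply: (ub f Sf).1.
have fr_pc_fl t : le (fr v t) (pc (fl v t)) := ICbar_fr_le_pc vC.1 (lexx t).
split=> [r|s] /=.
  apply: sup_gt_le => t rt; apply: le_trans (Cbar_pc_fr_le vC rt).
  exact: le_trans (pc_anti (pc_anti (gv t))) (pc_anti (fr_pc_fl t)).
rewrite (vC.1.2.2 s); apply: sup_lt_le => t ts; apply: le_trans (le_sup_lt _ ts).
exact: le_trans (fr_pc_fl t) (pc_anti (gv t)).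
Qed.

End CbarJoin.

Lemma ext_disc_Cbar_complete : ext_disc L -> Cbar_complete L.
Proof.
move=> ED S SC; exists (Cbar_sup S); split; first exact: Cbar_sup_Cbar.
by split=> [f Sf|]; [apply: Cbar_sup_ub (SC f Sf) Sf | apply: Cbar_sup_least].
Qed.

Definition scale (c : rat -> L) : Prop := forall p q, p < q -> rather_below (c p) (c q).

Lemma scale_le {c p q} : scale c -> p <= q -> le (c p) (c q).
Proof.
move=> sc pq; case: (boolP (p < q)) => [/sc/rather_below_le // | qp].
have -> : q = p by lra.
exact: le_refl.
Qed.

Lemma scale_meet_pc {c p q} : scale c -> p <= q -> meet (c p) (pc (c q)) = fbot L.
Proof.
move=> sc pq; apply: lex0_eq; rewrite -(meet_pc (c q)).
exact: leI2 (scale_le sc pq) (le_refl _).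
Qed.

Lemma completely_below_scale x b : completely_below x b ->
  exists c, [/\ scale c, c 0 = x, c 1 = b & forall p, p < 0 -> c p = fbot L].
Proof.
case=> c [c0 [c1 sc]].
exists (fun p => if p < 0 then fbot L else if 1 < p then ftop L else c p).
split=> [p q pq /= | | | p ->] //.
case: (boolP (p < 0)) => p0; first exact: rather_below0x.
have -> : (q < 0) = false by apply/negbTE; lra.
case: (boolP (1 < q)) => q1; first exact: rather_belowx1.
have -> : (1 < p) = false by apply/negbTE; lra.
by apply: sc; lra.
Qed.

(* [compl_map f] is the function [1 - f]. *)
Definition compl_map (f : ir_map L) : ir_map L :=
  IRMap (fun r => fr f (1 - r)) (fun s => fl f (1 - s)).

Lemma compl_map_Cbar f : Cbar f -> Cbar (compl_map f).
Proof.
move=> [[r1 [r3 r4]] fC]; split; first split=> [r s sr|].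
- by rewrite /= meetC; apply: r1; lra.
- split=> [r|s].
    exact: etrans (r4 _) (esym (sup_gt_reflect _ r)).
  exact: etrans (r3 _) (esym (sup_lt_reflect _ s)).
- by move=> r s rs /=; rewrite joinC; apply: fC; lra.
Qed.

(* The function [x |-> inf {p | x in c p}]. *)
Definition scale_map (c : rat -> L) : ir_map L := sup_map (fun t => pc (c t)) c.

Lemma scale_map_Cbar {c} : scale c -> Cbar (scale_map c).
Proof.
move=> sc; apply: sup_map_Cbar => // t t' t't.
by rewrite meetC; apply: scale_meet_pc sc _; lra.
Qed.

Lemma meet_scale_map_fl {c} r : scale c -> meet (fl (scale_map c) r) (c r) = fbot L.
Proof.
move=> sc; rewrite meetC; apply: meet_sup_eq0 => _ [t rt ->].
by apply: scale_meet_pc sc _; lra.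
Qed.

Lemma compl_scale_map_le c d :
  (forall p q, p + q < 1 -> meet (c p) (d q) = fbot L) ->
  ic_le (compl_map (scale_map c)) (scale_map d).
Proof.
move=> cd0; split=> [r|s] /=; apply: sup_lt_le => p ps.
  have rq : r < (r + 1 - p) / 2 by lra.
  by apply: le_trans (le_sup_gt _ rq); apply: le_pc; apply: cd0; lra.
have sq : 1 - s < (2 - s - p) / 2 by lra.
by apply: le_trans (le_sup_gt _ sq); apply: le_pc; rewrite meetC; apply: cd0; lra.
Qed.

Lemma scale_meet_eq0 c d : scale c -> scale d ->
  (forall p, p < 0 -> c p = fbot L) -> (forall q, q < 0 -> d q = fbot L) ->
  meet (c 1) (d 1) = fbot L -> forall p q, p + q < 1 -> meet (c p) (d q) = fbot L.
Proof.
move=> sc sd c0 d0 cd1 p q pq.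
case: (boolP (p < 0)) => [/c0 ->| p0]; first exact: meet0x.
case: (boolP (q < 0)) => [/d0 ->| q0]; first exact: meetx0.
have cp1 : le (c p) (c 1) by apply: scale_le sc _; lra.
have dq1 : le (d q) (d 1) by apply: scale_le sd _; lra.
by apply: lex0_eq; rewrite -cd1; apply: leI2 cp1 dq1.
Qed.

Lemma Cbar_complete_ext_disc : completely_regular L -> Cbar_complete L -> ext_disc L.
Proof.
move=> CR comp a.
pose S f := exists c, [/\ scale c, c 1 = a, forall p, p < 0 -> c p = fbot L
  & f = compl_map (scale_map c)].
have SC f : S f -> Cbar f by case=> c [sc _ _ ->]; apply/compl_map_Cbar/scale_map_Cbar.
have [u [uC [u_ub u_least]]] := comp S SC.
have fr_u : le (fr u 1) (pc a).
  apply: completely_regular_le_pc => // x /completely_below_scale [c [sc cx c1 c0]].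
  have Sc : S (compl_map (scale_map c)) by exists c.
  have [_ /(_ 1) /=] := u_ub _ Sc; rewrite subrr => fr_le.
  apply: lex0_eq; rewrite -(meet_scale_map_fl 0 sc) -cx.
  exact: leI2 fr_le (le_refl _).
have fl_u : le (fl u 0) (pc (pc a)).
  apply: completely_regular_le_pc => // y /completely_below_scale [d [sd dy d1 d0]].
  have ub_d f : S f -> ic_le f (scale_map d).
    case=> c [sc c1 c0 ->]; apply/compl_scale_map_le/scale_meet_eq0 => //.
    by rewrite c1 d1; apply: meet_pc.
  have [fl_le _] := u_least _ (scale_map_Cbar sd) ub_d.
  apply: lex0_eq; rewrite -(meet_scale_map_fl 0 sd) -dy.
  exact: leI2 (fl_le 0) (le_refl _).
by apply: join_top_le2 fr_u fl_u _; rewrite joinC; apply: uC.2; apply: ltr01.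
Qed.

End FrameTheory.

Theorem proposition3p11 (L : frame) :
  completely_regular L ->
  (ext_disc L <-> Cbar_eq_Hbar L) /\ (ext_disc L <-> Cbar_complete L).
Proof.
move=> CR; split; split.
- by move=> ED f; split; [apply: Cbar_Hbar | apply: Hbar_Cbar].
- exact: Cbar_eq_Hbar_ext_disc.
- exact: ext_disc_Cbar_complete.
- exact: Cbar_complete_ext_disc.
Qed.
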